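(* Let $A$ be a real symmetric $n\times n$ matrix such that the graph $\mathcal{G}(A)$ is connected and all nonzero off-diagonal entries of $A$ have the same sign. Let $S\subseteq\{1,\dots,n\}$ and $Z=\{{\bf e}_j : j\in S\}$. Then the real linear span of $P(A,Z)$ is contained in $\mathcal{L}(A,Z)$.
   Context: ${\bf e}_j$ is the $j$th standard basis vector of $\mathbb{R}^n$. For a real symmetric $n\times n$ matrix $A=[a_{kj}]$, $\mathcal{G}(A)$ is the simple graph on $\{1,\dots,n\}$ with edges $\{kj: a_{kj}\neq0,\ k\neq j\}$. For $Z=\{{\bf z}_1,\dots,{\bf z}_s\}\subset\mathbb{R}^n$: $P(A,Z):=\{A^m{\bf z}_k{\bf z}_j^TA^\ell : 1\le k,j\le s,\ 0\le m,\ell\le n-1\}$, and $\mathcal{L}(A,Z)$ is the real Lie algebra generated by $A,{\bf z}_1{\bf z}_1^T,\dots,{\bf z}_s{\bf z}_s^T$, i.e. the smallest real vector space of matrices containing these and closed under the commutator $[X,Y]=XY-YX$. *)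

From HB Require Import structures.
From mathcomp Require Import all_boot all_order all_algebra.
From mathcomp Require Import reals.
Set Implicit Arguments. Unset Strict Implicit. Unset Printing Implicit Defensive.
Import Order.TTheory GRing.Theory Num.Theory.
Local Open Scope ring_scope.

Definition evec {R : realType} {n : nat} (j : 'I_n) : 'cV[R]_n := delta_mx j 0.

Definition gadj {R : realType} {n : nat} (A : 'M[R]_n) : rel 'I_n :=
  fun k j => (k != j) && (A k j != 0).

Definition graph_connected {R : realType} {n : nat} (A : 'M[R]_n) : Prop :=
  forall k j : 'I_n, connect (gadj A) k j.

Definition offdiag_same_sign {R : realType} {n : nat} (A : 'M[R]_n) : Prop :=
  (forall k j : 'I_n, k != j -> A k j != 0 -> 0 < A k j) \/
  (forall k j : 'I_n, k != j -> A k j != 0 -> A k j < 0).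

Definition comm_mx {R : realType} {n : nat} (X Y : 'M[R]_n) : 'M[R]_n :=
  X *m Y - Y *m X.

Inductive in_span {R : realType} {n : nat} (G : 'M[R]_n -> Prop) : 'M[R]_n -> Prop :=
  | span0 : in_span G 0
  | span_gen X : G X -> in_span G X
  | spanD X Y : in_span G X -> in_span G Y -> in_span G (X + Y)
  | spanZ (c : R) X : in_span G X -> in_span G (c *: X).

Inductive in_lie {R : realType} {n : nat} (G : 'M[R]_n -> Prop) : 'M[R]_n -> Prop :=
  | lie0 : in_lie G 0
  | lie_gen X : G X -> in_lie G X
  | lieD X Y : in_lie G X -> in_lie G Y -> in_lie G (X + Y)
  | lieZ (c : R) X : in_lie G X -> in_lie G (c *: X)
  | lie_comm X Y : in_lie G X -> in_lie G Y -> in_lie G (comm_mx X Y).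

Definition Zset {R : realType} {n : nat} (S : {set 'I_n}) : 'cV[R]_n -> Prop :=
  fun z => exists2 j, j \in S & z = evec j.

Definition Pset {R : realType} {n : nat} (A : 'M[R]_n) (Z : 'cV[R]_n -> Prop)
  : 'M[R]_n -> Prop :=
  fun X => exists zk zj (m l : nat),
    [/\ Z zk, Z zj, (m <= n - 1)%N, (l <= n - 1)%N &
        X = (A ^+ m) *m zk *m zj^T *m (A ^+ l)].

(* Generators of L(A,Z): A and z z^T for z in Z. *)
Definition Lgens {R : realType} {n : nat} (A : 'M[R]_n) (Z : 'cV[R]_n -> Prop)
  : 'M[R]_n -> Prop :=
  fun X => X = A \/ exists2 z, Z z & X = z *m z^T.

From Pilot Require Import Defs.
From HB Require Import structures.
From mathcomp Require Import all_boot all_order all_algebra.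
From mathcomp Require Import reals lra.
Import Order.TTheory GRing.Theory Num.Theory.
Set Implicit Arguments. Unset Strict Implicit. Unset Printing Implicit Defensive.
Local Open Scope ring_scope.

(* Write E_j for the matrix unit e_j e_j^T, j in S, and L for L(A,Z).  For an
   idempotent E, the Peirce component E X (1 - E) of X is (ad_E^2 + ad_E) X / 2,
   so left multiplication by E_j maps L into L (E_j X E_j is a multiple of E_j);
   since all generators are symmetric, L is closed under transposition and so is
   right multiplication by E_j.  Commutators then show E_j A^m, A^m E_j and
   X E_j A^m (X in L) lie in L.  Hence A^m E_k A^p E_j A^l = (A^p)_kj A^m E_kj A^l
   is in L, and it remains to find p with (A^p)_kj <> 0.  Up to sign, A + cI has
   nonnegative entries for large c and positive ones on the edges of G(A), so its
   powers, which are polynomials in A, become positive along every path. *)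

Lemma delta_mul_delta (R : pzRingType) n (a b c d : 'I_n) (M : 'M[R]_n) :
  delta_mx a b *m M *m delta_mx c d = M b c *: delta_mx a d.
Proof.
apply/matrixP=> i k; rewrite !mxE (bigD1 c) //= big1 => [|l /negbTE lc]; last first.
  by rewrite [delta_mx c d l k]mxE lc mulr0.
rewrite !mxE eqxx addr0 (bigD1 b) //= big1 => [|l /negbTE lb]; last first.
  by rewrite mxE lb andbF mul0r.
rewrite !mxE eqxx addr0.
by case: (i == a); case: (k == d); rewrite ?mulr1 ?mul1r ?mulr0 ?mul0r.
Qed.

Lemma peirce_idem (T : pzRingType) (e x : T) : e * e = e ->
  (e * x * (1 - e)) *+ 2 = e * (e * x - x * e) - (e * x - x * e) * e + (e * x - x * e).
Proof.
move=> ee; rewrite !(mulrBr, mulrBl) mulr1 !mulrA ee -(mulrA x) ee mulr2n.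
by rewrite opprB -[RHS]addrA; congr (_ + _); rewrite addrC addrA subrK.
Qed.

Section LieClosure.

Variables (R : realType) (n : nat) (G : 'M[R]_n -> Prop).

Lemma lie_trmx : (forall X, G X -> X^T = X) -> forall X, in_lie G X -> in_lie G X^T.
Proof.
move=> symG X; elim=> {X} [|X gX|X Y _ hX _ hY|c X _ hX|X Y _ hX _ hY].
- by rewrite trmx0; apply: lie0.
- by rewrite symG //; apply: lie_gen.
- by rewrite linearD; apply: lieD.
- by rewrite linearZ; apply: lieZ.
- by rewrite /Defs.comm_mx linearB /= !trmx_mul; apply: lie_comm.
Qed.

Lemma lie_peirce E X : E *m E = E -> in_lie G E -> in_lie G X ->
  in_lie G (E *m X *m (1%:M - E)).
Proof.
move=> EE hE hX; have hEX := lie_comm hE hX.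
have := lieZ 2^-1 (lieD (lie_comm hE hEX) hEX).
rewrite /Defs.comm_mx !mulmxE -(peirce_idem X EE) -scaler_nat scalerA.
by rewrite mulVf ?pnatr_eq0 // scale1r.
Qed.

Lemma lie_delta_mull j X : in_lie G (delta_mx j j) -> in_lie G X ->
  in_lie G (delta_mx j j *m X).
Proof.
move=> hE hX; have EE : delta_mx j j *m delta_mx j j = delta_mx j j :> 'M[R]_n.
  by rewrite mul_delta_mx.
have -> : delta_mx j j *m X = X j j *: delta_mx j j + delta_mx j j *m X *m (1%:M - delta_mx j j).
  by rewrite mulmxBr mulmx1 delta_mul_delta addrC subrK.
exact: lieD (lieZ _ hE) (lie_peirce EE hE hX).
Qed.

End LieClosure.

Section GeneratedLie.

Variables (R : realType) (n : nat) (A : 'M[R]_n) (S : {set 'I_n}).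
Hypothesis symA : A^T = A.

Local Notation L := (in_lie (Lgens A (Zset S))).

Lemma lie_A : L A.
Proof. by apply: lie_gen; left. Qed.

Lemma lie_delta j : j \in S -> L (delta_mx j j).
Proof.
move=> jS; apply: lie_gen; right; exists (evec j); first by exists j.
by rewrite /evec trmx_delta mul_delta_mx.
Qed.

Lemma trmx_exp_sym m : (A ^+ m)^T = A ^+ m.
Proof.
elim: m => [|m IH]; first by rewrite expr0 trmx1.
by rewrite exprS -mulmxE trmx_mul IH symA !mulmxE -exprSr exprS.
Qed.

Lemma lie_trmx_gen X : L X -> L X^T.
Proof. by apply: lie_trmx => _ [->|[z _ ->]] //; rewrite trmx_mul trmxK. Qed.

Lemma lie_mul_delta j X : j \in S -> L X -> L (X *m delta_mx j j).
Proof.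
move=> jS /lie_trmx_gen/(lie_delta_mull (lie_delta jS))/lie_trmx_gen.
by rewrite trmx_mul trmxK trmx_delta.
Qed.

Lemma lie_delta_exp j m : j \in S -> L (delta_mx j j *m A ^+ m).
Proof.
move=> jS; elim: m => [|m IH]; first by rewrite expr0 mulmx1; apply: lie_delta.
have := lieD (lie_delta_mull (lie_delta jS) (lie_comm IH lie_A)) (lieZ (A j j) IH).
rewrite /Defs.comm_mx mulmxBr !mulmxA mul_delta_mx delta_mul_delta -scalemxAl subrK.
by rewrite -mulmxA mulmxE -exprSr.
Qed.

Lemma lie_exp_delta j m : j \in S -> L (A ^+ m *m delta_mx j j).
Proof.
by move=> jS; have := lie_trmx_gen (lie_delta_exp m jS); rewrite trmx_mul trmx_delta trmx_exp_sym.
Qed.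

Lemma lie_mul_delta_exp j m X : j \in S -> L X -> L (X *m delta_mx j j *m A ^+ m).
Proof.
move=> jS hX; have := lieD (lie_comm (lie_mul_delta jS hX) (lie_delta_exp m jS))
  (lieZ ((A ^+ m *m X) j j) (lie_delta jS)).
rewrite /Defs.comm_mx !mulmxA -(mulmxA X) mul_delta_mx.
by rewrite -(mulmxA _ (A ^+ m) X) delta_mul_delta subrK.
Qed.

Lemma lie_exp_delta_exp k j p m l : k \in S -> j \in S -> (A ^+ p) k j != 0 ->
  L (A ^+ m *m delta_mx k j *m A ^+ l).
Proof.
move=> kS jS nz.
have h := lie_mul_delta_exp l jS (lie_mul_delta_exp p kS (lie_exp_delta m kS)).
have := lieZ ((A ^+ p) k j)^-1 h.
rewrite -(mulmxA (A ^+ m) (delta_mx k k) (delta_mx k k)) mul_delta_mx.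
rewrite -(mulmxA (A ^+ m) (delta_mx k k)) -(mulmxA (A ^+ m)) delta_mul_delta.
by rewrite -scalemxAr -scalemxAl scalerA mulVf // scale1r.
Qed.

End GeneratedLie.

Section ConnectedPowers.

Variables (R : realType) (n : nat) (A : 'M[R]_n).

Definition powers : 'M[R]_n -> Prop := fun Q => exists m, Q = A ^+ m.

Lemma span_powers_mulr Q : in_span powers Q -> in_span powers (Q *m A).
Proof.
elim=> {Q} [|Q [m ->]|X Y _ hX _ hY|c X _ hX].
- by rewrite mul0mx; apply: span0.
- by apply: span_gen; exists m.+1; rewrite exprSr mulmxE.
- by rewrite mulmxDl; apply: spanD.
- by rewrite -scalemxAl; apply: spanZ.
Qed.

Lemma span_powers_entry Q k j : in_span powers Q -> Q k j != 0 ->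
  exists p, (A ^+ p) k j != 0.
Proof.
elim=> {Q} [|Q [m ->]|X Y _ hX _ hY|c X _ hX]; rewrite ?mxE.
- by rewrite eqxx.
- by exists m.
- by case: (eqVneq (X k j) 0) => [->|/hX//]; rewrite add0r.
- by rewrite mulf_eq0 negb_or => /andP[_ /hX].
Qed.

Lemma offdiag_same_sign_adj : offdiag_same_sign A ->
  exists s : R, forall a b, gadj A a b -> 0 < s * A a b.
Proof.
case=> sgn; [exists 1 | exists (-1)] => a b /andP[ab nz];
  [rewrite mul1r | rewrite mulN1r oppr_gt0]; exact: sgn.
Qed.

Variable s : R.
Hypothesis sign_s : forall a b, gadj A a b -> 0 < s * A a b.

Lemma exists_nonneg_adj_pos : exists N : 'M[R]_n,
  [/\ forall Q, in_span powers Q -> in_span powers (Q *m N),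
      forall a b, 0 <= N a b & forall a b, gadj A a b -> 0 < N a b].
Proof.
pose c := \sum_i `|s * A i i|; exists (s *: A + c%:M); split.
- move=> Q spanQ; rewrite mulmxDr -scalemxAr mul_mx_scalar.
  by apply: spanD; apply: spanZ => //; apply: span_powers_mulr.
- move=> a b; rewrite !mxE; case: (eqVneq a b) => [<-|ab].
    have : `|s * A a a| <= c by rewrite /c (bigD1 a) //= lerDl sumr_ge0.
    by rewrite mulr1n => /lerNnormlW; lra.
  rewrite mulr0n addr0; case: (eqVneq (A a b) 0) => [->|nz]; first by rewrite mulr0.
  by apply/ltW/sign_s/andP.
- by move=> a b /[dup] /andP[ab _] /sign_s; rewrite !mxE (negbTE ab) mulr0n addr0.
Qed.

Lemma connect_exp_neq0 k j : connect (gadj A) k j -> exists p, (A ^+ p) k j != 0.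
Proof.
have [N [spanN N_ge0 N_pos]] := exists_nonneg_adj_pos.
move=> /connectP[p kp ->].
suff walk x : path (gadj A) x p ->
    (exists2 Q, in_span powers Q & (forall i, 0 <= Q k i) /\ 0 < Q k x) ->
    exists2 Q, in_span powers Q & 0 < Q k (last x p).
  have [|Q spanQ Q_pos] := walk k kp.
    exists (A ^+ 0); first by apply: span_gen; exists 0%N.
    by rewrite expr0; split=> [i|]; rewrite mxE ?ler0n ?eqxx ?ltr01.
  exact: span_powers_entry spanQ (lt0r_neq0 Q_pos).
elim: p x {kp} => [|y p IH] x /=; first by move=> _ [Q spanQ []]; exists Q.
move=> /andP[xy yp] [Q spanQ [Q_ge0 Q_pos]]; apply: IH yp _.
exists (Q *m N); first exact: spanN.
have rest_ge0 : 0 <= \sum_(i | i != x) Q k i * N i y.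
  by apply: sumr_ge0 => i _; apply: mulr_ge0.
have xy_pos : 0 < Q k x * N x y by apply: mulr_gt0 => //; apply: N_pos.
split=> [i|]; rewrite mxE; first by apply: sumr_ge0 => l _; apply: mulr_ge0.
by rewrite (bigD1 x) //=; lra.
Qed.

End ConnectedPowers.

Theorem lemma3p6 (R : realType) (n : nat) (A : 'M[R]_n) (S : {set 'I_n}) :
  A^T = A ->
  graph_connected A ->
  offdiag_same_sign A ->
  forall X : 'M[R]_n, in_span (Pset A (Zset S)) X -> in_lie (Lgens A (Zset S)) X.
Proof.
move=> symA conn /offdiag_same_sign_adj[s sign_s] X.
elim=> {X} [|X [_ [_ [m [l [[k kS ->] [j jS ->] _ _ ->]]]]]|X Y _ hX _ hY|c X _ hX].
- exact: lie0.
- have [p nz] := connect_exp_neq0 sign_s (conn k j).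
  rewrite /evec trmx_delta -(mulmxA (A ^+ m)) mul_delta_mx.
  apply: (lie_exp_delta_exp symA m l kS jS nz).
- exact: lieD.
- exact: lieZ.
Qed.
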